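(* Let $\chi,b,\nu,\mu>0$ with $b\ge\frac32\chi\mu$, and $c\in\mathbb{R}$. Let $r$ be globally Hölder continuous and bounded with finite limits $r(\pm\infty)$, $r(-\infty)<0<r(\infty)$ and $r(-\infty)\le r(x)\le r(\infty)$ for all $x$; put $r^*=\sup r=r(\infty)$. Fix $r_1$ with $r(-\infty)<r_1<0$, a point $x_1$ with $r(x)\le r_1$ for all $x\le x_1$, and let $\theta_1$ be the positive root of $\theta^2+c\theta+r_1=0$. Then for every $u\in\mathcal{E}_1^+$: $$\mathcal{A}_u\Big(\frac{r^*}{b-\chi\mu}\Big)(x)\le0\ \text{ for all }x\in\mathbb{R},\qquad \mathcal{A}_u\Big(\frac{r^*}{b-\chi\mu}e^{\theta_1(\cdot-x_1)}\Big)(x)\le 0\ \text{ for all }x\in(-\infty,x_1).$$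
   Context: $C^b_{\rm unif}(\mathbb{R})$: bounded uniformly continuous functions on $\mathbb{R}$. For $u\in C^b_{\rm unif}(\mathbb{R})$, $\Psi(x;u)=\frac{\mu}{2\sqrt\nu}\int_{\mathbb{R}}e^{-\sqrt\nu|x-y|}u(y)\,dy$ (the bounded solution of $\Psi''-\nu\Psi+\mu u=0$). $U_1^+(x)=\min\{\frac{r^*}{b-\chi\mu},\frac{r^*}{b-\chi\mu}e^{\theta_1(x-x_1)}\}$ and $\mathcal{E}_1^+=\{u\in C^b_{\rm unif}(\mathbb{R}):0\le u(x)\le U_1^+(x)\ \forall x\}$. For $u\in\mathcal{E}_1^+$ and $U\in C^2$, $$\mathcal{A}_u(U)(x)=U_{xx}+(c-\chi\Psi_x(x;u))U_x+(r(x)-\chi\nu\Psi(x;u)-(b-\chi\mu)U)U.$$ *)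

From Stdlib Require Import Reals Lra.
From Coquelicot Require Import Coquelicot.
Open Scope R_scope.

Definition unif_cont (u : R -> R) : Prop :=
  forall eps, 0 < eps -> exists delta, 0 < delta /\
    forall x y, Rabs (x - y) < delta -> Rabs (u x - u y) < eps.

Definition Cb_unif (u : R -> R) : Prop :=
  (exists M, forall x, Rabs (u x) <= M) /\ unif_cont u.

Definition Psi (nu mu : R) (u : R -> R) (x : R) : R :=
  mu / (2 * sqrt nu) *
  RInt_gen (fun y => exp (- sqrt nu * Rabs (x - y)) * u y)
           (Rbar_locally m_infty) (Rbar_locally p_infty).

Definition U1plus (rstar b chi mu theta1 x1 : R) (x : R) : R :=
  Rmin (rstar / (b - chi * mu)) (rstar / (b - chi * mu) * exp (theta1 * (x - x1))).

Definition E1plus (rstar b chi mu theta1 x1 : R) (u : R -> R) : Prop :=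
  Cb_unif u /\ forall x, 0 <= u x <= U1plus rstar b chi mu theta1 x1 x.

Definition A_op (chi b nu mu c : R) (r : R -> R) (u : R -> R) (U : R -> R) (x : R) : R :=
  Derive_n U 2 x
  + (c - chi * Derive (Psi nu mu u) x) * Derive U x
  + (r x - chi * nu * Psi nu mu u x - (b - chi * mu) * U x) * U x.

Definition holder (r : R -> R) : Prop :=
  exists alpha K, 0 < alpha <= 1 /\ 0 <= K /\
    forall x y, x <> y -> Rabs (r x - r y) <= K * Rpower (Rabs (x - y)) alpha.

From Stdlib Require Import Reals Lra Classical.
From Coquelicot Require Import Coquelicot.
Open Scope R_scope.

(* Write a = sqrt nu.  Splitting the kernel at x gives
   Psi = mu/(2a) (S + T) with S(x) = int_{-oo}^x e^{-a(x-y)} u(y) dy ([conv_left])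
   and T(x) = int_x^{+oo} e^{-a(y-x)} u(y) dy ([conv_right]); both are nonnegative,
   and S' = u - a S, T' = a T - u give Psi_x = mu/2 (T - S).
   For the constant K = r^*/(b - chi mu), Psi >= 0 and r <= r^* make the reaction
   term nonpositive.  For U = K e^{theta1 (x - x1)} and x < x1,
   A_u(U) = U (theta1^2 + c theta1 + r - chi mu/2 (theta1 (T - S) + a (S + T)) - (b - chi mu) U),
   where theta1^2 + c theta1 = -r1 <= -r, and u <= U on (-oo, x] gives
   (a + theta1) S <= U; so the bracket is at most (3/2 chi mu - b) U <= 0. *)

Lemma continuous_of_unif_cont (u : R -> R) : unif_cont u -> forall x, continuous u x.
Proof.
  intros Hu x. apply continuity_pt_filterlim. intros eps Heps.
  destruct (Hu eps Heps) as [delta [Hdelta Hclose]].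
  exists delta. split; [exact Hdelta|]. intros y [_ Hy]. apply Hclose. exact Hy.
Qed.

Section ContinuousIntegrand.

Variable f : R -> R.
Hypothesis f_cont : forall x, continuous f x.

Lemma ex_RInt_cont (s t : R) : ex_RInt f s t.
Proof. apply (@ex_RInt_continuous R_CompleteNormedModule). intros; apply f_cont. Qed.

Lemma RInt_Chasles_cont (s t v : R) : RInt f s t + RInt f t v = RInt f s v.
Proof. apply (RInt_Chasles f); apply ex_RInt_cont. Qed.

Lemma RInt_swap_cont (s t : R) : RInt f t s = - RInt f s t.
Proof. rewrite <- (opp_RInt_swap f s t); [reflexivity|apply ex_RInt_cont]. Qed.

Lemma RInt_ge0_cont (s t : R) : (forall x, 0 <= f x) -> s <= t -> 0 <= RInt f s t.
Proof. intros Hf Hst. apply RInt_ge_0; auto. apply ex_RInt_cont. Qed.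

Lemma RInt_comp_opp_cont (s t : R) : RInt (fun y => f (- y)) s t = RInt f (- t) (- s).
Proof.
  rewrite RInt_swap_cont. apply is_RInt_unique.
  apply (is_RInt_ext (fun y => opp (scal (-1) (f (- y))))).
  { intros y _. unfold opp, scal; simpl; unfold mult; simpl. ring. }
  apply (@is_RInt_opp R_NormedModule _ s t (RInt f (- s) (- t))).
  apply (@is_RInt_comp R_CompleteNormedModule f Ropp (fun _ => -1)).
  - intros; apply f_cont.
  - intros y _. split; [auto_derive; auto|apply continuous_const].
Qed.

Lemma is_derive_RInt_cont (s x : R) : is_derive (fun t => RInt f s t) x (f x).
Proof.
  apply (is_derive_RInt f _ s); [|apply f_cont].
  apply filter_forall. intros t. apply (@RInt_correct R_CompleteNormedModule), ex_RInt_cont.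
Qed.

Lemma is_RInt_gen_at_point_lim {Fb : (R -> Prop) -> Prop} {FFb : Filter Fb} (a L : R) :
  filterlim (fun t => RInt f a t) Fb (locally L) ->
  is_RInt_gen f (at_point a) Fb L.
Proof.
  intros Hlim P HP.
  apply Filter_prod with (fun x => x = a) (fun t => P (RInt f a t)).
  - reflexivity.
  - exact (Hlim P HP).
  - intros x t -> Ht. exists (RInt f a t). split; [|exact Ht].
    apply (@RInt_correct R_CompleteNormedModule), ex_RInt_cont.
Qed.

Lemma is_RInt_gen_lim_at_point (b L : R) :
  is_lim (fun t => RInt f t b) m_infty L ->
  is_RInt_gen f (Rbar_locally m_infty) (at_point b) L.
Proof.
  intros Hlim. rewrite <- (Ropp_involutive L).
  apply (is_RInt_gen_swap f (- L)), is_RInt_gen_at_point_lim.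
  change (is_lim (fun t => RInt f b t) m_infty (- L)).
  apply (is_lim_ext (fun t => - RInt f t b)); [intros t; symmetry; apply RInt_swap_cont|].
  exact (is_lim_opp _ _ _ Hlim).
Qed.

End ContinuousIntegrand.

Lemma RInt_le_exp (h : R -> R) (k s t0 t1 : R) :
  (forall x, continuous h x) -> s <> 0 -> t0 <= t1 ->
  (forall y, t0 <= y <= t1 -> h y <= k * exp (s * y)) ->
  RInt h t0 t1 <= k / s * (exp (s * t1) - exp (s * t0)).
Proof.
  intros Hc Hs Ht Hle.
  assert (Hexp : is_RInt (fun y => k * exp (s * y)) t0 t1
                        (k / s * (exp (s * t1) - exp (s * t0)))).
  { replace (k / s * (exp (s * t1) - exp (s * t0))) with
      (minus (k / s * exp (s * t1)) (k / s * exp (s * t0)))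
      by (unfold minus, plus, opp; simpl; ring).
    apply (@is_RInt_derive R_CompleteNormedModule (fun y => k / s * exp (s * y))).
    - intros y _. auto_derive; auto. field. exact Hs.
    - intros y _. apply (@ex_derive_continuous R_AbsRing R_NormedModule). auto_derive. auto. }
  rewrite <- (is_RInt_unique _ _ _ _ Hexp).
  apply RInt_le; auto.
  - apply ex_RInt_cont, Hc.
  - eexists; exact Hexp.
  - intros y Hy. apply Hle. lra.
Qed.

Lemma is_lim_minfty_nonincreasing (F : R -> R) (c B : R) :
  (forall s t, s <= t -> F t <= F s) -> (forall t, t <= c -> F t <= B) ->
  exists L : R, is_lim F m_infty L.
Proof.
  intros Hmono Hbound.
  destruct (completeness (fun v => exists t, v = F t)) as [L [Hub Hlub]].
  - exists B. intros v [t ->].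
    apply Rle_trans with (F (Rmin t c)); [apply Hmono, Rmin_l|apply Hbound, Rmin_r].
  - exists (F 0), 0. reflexivity.
  - exists L. apply is_lim_spec. intros eps.
    destruct (classic (exists t0, L - eps < F t0)) as [[t0 Ht0]|Hnone].
    + exists t0. intros t Ht.
      assert (F t <= L) by (apply Hub; exists t; reflexivity).
      assert (F t0 <= F t) by (apply Hmono; lra).
      apply Rabs_def1; lra.
    + exfalso.
      assert (L <= L - eps).
      { apply Hlub. intros v [t ->].
        apply Rnot_lt_le. intros Hlt. apply Hnone. exists t. exact Hlt. }
      pose proof (cond_pos eps). lra.
Qed.

Definition left_tail (f : R -> R) (x : R) : R :=
  RInt_gen f (Rbar_locally m_infty) (at_point x).

Definition right_tail (f : R -> R) (x : R) : R :=
  RInt_gen f (at_point x) (Rbar_locally p_infty).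

Section LeftTail.

Variables (f : R -> R) (B : R).
Hypothesis f_cont : forall x, continuous f x.
Hypothesis f_ge0 : forall x, 0 <= f x.
Hypothesis f_left_bounded : forall t, t <= 0 -> RInt f t 0 <= B.

Lemma is_lim_RInt_left_tail (x : R) :
  is_lim (fun t => RInt f t x) m_infty (left_tail f x).
Proof.
  destruct (is_lim_minfty_nonincreasing (fun t => RInt f t 0) 0 B) as [L HL].
  - intros s t Hst. rewrite <- (RInt_Chasles_cont f f_cont s t 0).
    pose proof (RInt_ge0_cont f f_cont s t f_ge0 Hst). lra.
  - exact f_left_bounded.
  - assert (Hx : is_lim (fun t => RInt f t x) m_infty (L + RInt f 0 x)).
    { apply (is_lim_ext (fun t => RInt f t 0 + RInt f 0 x)).
      { intros t. apply RInt_Chasles_cont, f_cont. }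
      apply is_lim_plus'; [exact HL|apply is_lim_const]. }
    unfold left_tail.
    rewrite (is_RInt_gen_unique f _ (is_RInt_gen_lim_at_point f f_cont x _ Hx)).
    exact Hx.
Qed.

Lemma is_RInt_gen_left_tail (x : R) :
  is_RInt_gen f (Rbar_locally m_infty) (at_point x) (left_tail f x).
Proof. apply is_RInt_gen_lim_at_point, is_lim_RInt_left_tail; exact f_cont. Qed.

Lemma left_tail_Chasles (x : R) : left_tail f x = left_tail f 0 + RInt f 0 x.
Proof.
  apply is_RInt_gen_unique, (is_RInt_gen_Chasles f 0); [apply is_RInt_gen_left_tail|].
  apply is_RInt_gen_at_point, (@RInt_correct R_CompleteNormedModule), ex_RInt_cont, f_cont.
Qed.

Lemma is_derive_left_tail (x : R) : is_derive (left_tail f) x (f x).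
Proof.
  apply (is_derive_ext (fun t => left_tail f 0 + RInt f 0 t)).
  { intros t. symmetry. apply left_tail_Chasles. }
  rewrite <- (Rplus_0_l (f x)).
  apply (is_derive_plus (fun _ => left_tail f 0)); [exact (is_derive_const (left_tail f 0) x)|].
  apply is_derive_RInt_cont, f_cont.
Qed.

Lemma left_tail_le (x C : R) : (forall t, t <= x -> RInt f t x <= C) -> left_tail f x <= C.
Proof.
  intros HC. change (Rbar_le (left_tail f x) C).
  apply (filterlim_le (F := Rbar_locally m_infty) (fun t => RInt f t x) (fun _ => C)).
  - exists x. intros t Ht. apply HC. lra.
  - exact (is_lim_RInt_left_tail x).
  - apply filterlim_const.
Qed.

Lemma left_tail_ge0 (x : R) : 0 <= left_tail f x.
Proof.
  change (Rbar_le 0 (left_tail f x)).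
  apply (filterlim_le (F := Rbar_locally m_infty) (fun _ => 0) (fun t => RInt f t x)).
  - exists x. intros t Ht. apply RInt_ge0_cont; auto. lra.
  - apply filterlim_const.
  - exact (is_lim_RInt_left_tail x).
Qed.

End LeftTail.

Section RightTail.

Variables (f : R -> R) (B : R).
Hypothesis f_cont : forall x, continuous f x.
Hypothesis f_ge0 : forall x, 0 <= f x.
Hypothesis f_right_bounded : forall t, 0 <= t -> RInt f 0 t <= B.

Let f_opp_cont (x : R) : continuous (fun y => f (- y)) x.
Proof.
  apply (continuous_comp Ropp f); [|apply f_cont].
  apply continuity_pt_filterlim, continuity_pt_opp, continuity_pt_id.
Qed.

Let f_opp_left_bounded (t : R) : t <= 0 -> RInt (fun y => f (- y)) t 0 <= B.
Proof.
  intros Ht. rewrite RInt_comp_opp_cont, Ropp_0 by exact f_cont.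
  apply f_right_bounded. lra.
Qed.

Lemma is_RInt_gen_right_tail_reflect (x : R) :
  is_RInt_gen f (at_point x) (Rbar_locally p_infty) (left_tail (fun y => f (- y)) (- x)).
Proof.
  apply is_RInt_gen_at_point_lim; [exact f_cont|exact _|].
  change (is_lim (fun t => RInt f x t) p_infty (left_tail (fun y => f (- y)) (- x))).
  apply (is_lim_ext (fun t => RInt (fun y => f (- y)) (- t) (- x))).
  { intros t. rewrite RInt_comp_opp_cont, !Ropp_involutive by exact f_cont. reflexivity. }
  apply (is_lim_comp (fun s => RInt (fun y => f (- y)) s (- x)) Ropp p_infty _ m_infty).
  - exact (is_lim_RInt_left_tail _ B f_opp_cont (fun y => f_ge0 (- y)) f_opp_left_bounded (- x)).
  - exact (is_lim_opp _ _ _ (is_lim_id p_infty)).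
  - exists 0. intros y _. discriminate.
Qed.

Lemma right_tail_reflect (x : R) : right_tail f x = left_tail (fun y => f (- y)) (- x).
Proof. apply is_RInt_gen_unique, is_RInt_gen_right_tail_reflect. Qed.

Lemma is_RInt_gen_right_tail (x : R) :
  is_RInt_gen f (at_point x) (Rbar_locally p_infty) (right_tail f x).
Proof. rewrite right_tail_reflect. apply is_RInt_gen_right_tail_reflect. Qed.

Lemma is_derive_right_tail (x : R) : is_derive (right_tail f) x (- f x).
Proof.
  apply (is_derive_ext (fun t => left_tail (fun y => f (- y)) (- t))).
  { intros t. symmetry. apply right_tail_reflect. }
  replace (- f x) with (scal (-1) (f (- - x)))
    by (rewrite Ropp_involutive; unfold scal; simpl; unfold mult; simpl; ring).
  apply (is_derive_comp (left_tail (fun y => f (- y))) Ropp).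
  - exact (is_derive_left_tail _ B f_opp_cont (fun y => f_ge0 (- y)) f_opp_left_bounded (- x)).
  - auto_derive; auto; ring.
Qed.

Lemma right_tail_ge0 (x : R) : 0 <= right_tail f x.
Proof.
  rewrite right_tail_reflect.
  exact (left_tail_ge0 _ B f_opp_cont (fun y => f_ge0 (- y)) f_opp_left_bounded (- x)).
Qed.

End RightTail.

Definition exp_weighted (s : R) (u : R -> R) (y : R) : R := exp (s * y) * u y.

Lemma continuous_exp_weighted (s : R) (u : R -> R) (x : R) :
  (forall y, continuous u y) -> continuous (exp_weighted s u) x.
Proof.
  intros Hu. apply (continuous_mult (fun y => exp (s * y)) u); [|apply Hu].
  apply (@ex_derive_continuous R_AbsRing R_NormedModule). auto_derive. auto.
Qed.

Definition conv_left (a : R) (u : R -> R) (x : R) : R :=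
  exp (- a * x) * left_tail (exp_weighted a u) x.

Definition conv_right (a : R) (u : R -> R) (x : R) : R :=
  exp (a * x) * right_tail (exp_weighted (- a) u) x.

Section ExpKernel.

Variables (a K : R) (u : R -> R).
Hypothesis a_gt0 : 0 < a.
Hypothesis u_cont : forall x, continuous u x.
Hypothesis u_bounds : forall x, 0 <= u x <= K.

Let weighted_cont (s x : R) : continuous (exp_weighted s u) x.
Proof. apply continuous_exp_weighted, u_cont. Qed.

Let weighted_ge0 (s x : R) : 0 <= exp_weighted s u x.
Proof. unfold exp_weighted. pose proof (exp_pos (s * x)). pose proof (u_bounds x). nra. Qed.

Let weighted_le (s y : R) : exp_weighted s u y <= K * exp (s * y).
Proof. unfold exp_weighted. pose proof (exp_pos (s * y)). pose proof (u_bounds y). nra. Qed.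

Let left_bounded (t : R) : t <= 0 -> RInt (exp_weighted a u) t 0 <= K / a.
Proof.
  intros Ht. eapply Rle_trans.
  { apply (RInt_le_exp _ K a t 0); [apply weighted_cont|lra|exact Ht|].
    intros y _. apply weighted_le. }
  rewrite Rmult_0_r, exp_0. pose proof (exp_pos (a * t)). pose proof (u_bounds 0).
  assert (0 <= K / a) by (apply Rdiv_le_0_compat; lra). nra.
Qed.

Let right_bounded (t : R) : 0 <= t -> RInt (exp_weighted (- a) u) 0 t <= K / a.
Proof.
  intros Ht. eapply Rle_trans.
  { apply (RInt_le_exp _ K (- a) 0 t); [apply weighted_cont|lra|exact Ht|].
    intros y _. apply weighted_le. }
  rewrite Rmult_0_r, exp_0. pose proof (exp_pos (- a * t)). pose proof (u_bounds 0).
  replace (K / - a) with (- (K / a)) by (field; lra).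
  assert (0 <= K / a) by (apply Rdiv_le_0_compat; lra). nra.
Qed.

Lemma conv_left_ge0 (x : R) : 0 <= conv_left a u x.
Proof.
  apply Rmult_le_pos; [apply Rlt_le, exp_pos|].
  exact (left_tail_ge0 _ _ (weighted_cont a) (weighted_ge0 a) left_bounded x).
Qed.

Lemma conv_right_ge0 (x : R) : 0 <= conv_right a u x.
Proof.
  apply Rmult_le_pos; [apply Rlt_le, exp_pos|].
  exact (right_tail_ge0 _ _ (weighted_cont (- a)) (weighted_ge0 (- a)) right_bounded x).
Qed.

Lemma is_derive_conv_left (x : R) :
  is_derive (conv_left a u) x (u x - a * conv_left a u x).
Proof.
  unfold conv_left.
  replace (u x - a * (exp (- a * x) * left_tail (exp_weighted a u) x)) with
    (- a * exp (- a * x) * left_tail (exp_weighted a u) x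
     + exp (- a * x) * exp_weighted a u x).
  2:{ unfold exp_weighted. replace (- a * x) with (- (a * x)) by ring.
      rewrite exp_Ropp. field. apply Rgt_not_eq, exp_pos. }
  apply (is_derive_mult (fun t => exp (- a * t)) (left_tail (exp_weighted a u))).
  - auto_derive; auto; ring.
  - exact (is_derive_left_tail _ _ (weighted_cont a) (weighted_ge0 a) left_bounded x).
  - intros; apply Rmult_comm.
Qed.

Lemma is_derive_conv_right (x : R) :
  is_derive (conv_right a u) x (a * conv_right a u x - u x).
Proof.
  unfold conv_right.
  replace (a * (exp (a * x) * right_tail (exp_weighted (- a) u) x) - u x) with
    (a * exp (a * x) * right_tail (exp_weighted (- a) u) x
     + exp (a * x) * - exp_weighted (- a) u x).
  2:{ unfold exp_weighted. replace (- a * x) with (- (a * x)) by ring.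
      rewrite exp_Ropp. field. apply Rgt_not_eq, exp_pos. }
  apply (is_derive_mult (fun t => exp (a * t)) (right_tail (exp_weighted (- a) u))).
  - auto_derive; auto; ring.
  - exact (is_derive_right_tail _ _ (weighted_cont (- a)) (weighted_ge0 (- a)) right_bounded x).
  - intros; apply Rmult_comm.
Qed.

Lemma is_RInt_gen_exp_abs (x : R) :
  is_RInt_gen (fun y => exp (- a * Rabs (x - y)) * u y)
    (Rbar_locally m_infty) (Rbar_locally p_infty) (conv_left a u x + conv_right a u x).
Proof.
  apply (is_RInt_gen_Chasles _ x (conv_left a u x) (conv_right a u x)).
  - pose proof (is_RInt_gen_scal _ (exp (- a * x)) _
      (is_RInt_gen_left_tail _ _ (weighted_cont a) (weighted_ge0 a) left_bounded x)) as Hleft.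
    eapply is_RInt_gen_ext; [|exact Hleft].
    apply Filter_prod with (fun s => s < x) (fun s => s = x); [exists x; auto|reflexivity|].
    intros s t Hs -> y Hy. simpl in Hy.
    rewrite Rmin_left, Rmax_right in Hy by lra. rewrite Rabs_right by lra.
    unfold scal; simpl; unfold mult; simpl; unfold exp_weighted.
    rewrite <- Rmult_assoc, <- exp_plus. do 2 f_equal. ring.
  - pose proof (is_RInt_gen_scal _ (exp (a * x)) _
      (is_RInt_gen_right_tail _ _ (weighted_cont (- a)) (weighted_ge0 (- a)) right_bounded x))
      as Hright.
    eapply is_RInt_gen_ext; [|exact Hright].
    apply Filter_prod with (fun s => s = x) (fun s => x < s); [reflexivity|exists x; auto|].
    intros s t -> Ht y Hy. simpl in Hy.
    rewrite Rmin_left, Rmax_right in Hy by lra. rewrite Rabs_left by lra.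
    unfold scal; simpl; unfold mult; simpl; unfold exp_weighted.
    rewrite <- Rmult_assoc, <- exp_plus. do 2 f_equal. ring.
Qed.

Lemma conv_left_le_exp (theta C x1 x : R) :
  0 < a + theta -> (forall y, y <= x -> u y <= C * exp (theta * (y - x1))) ->
  (a + theta) * conv_left a u x <= C * exp (theta * (x - x1)).
Proof.
  intros Hsum Hu.
  assert (HC : 0 <= C).
  { pose proof (exp_pos (theta * (x - x1))). pose proof (u_bounds x).
    pose proof (Hu x (Rle_refl x)). nra. }
  set (k := C * exp (- theta * x1)).
  assert (Hk : 0 <= k / (a + theta)).
  { apply Rdiv_le_0_compat; [|lra]. pose proof (exp_pos (- theta * x1)). unfold k. nra. }
  assert (Hshift : forall y,
    exp (a * y) * exp (theta * (y - x1)) = exp (- theta * x1) * exp ((a + theta) * y)).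
  { intros y. rewrite <- !exp_plus. f_equal. ring. }
  assert (Htail : left_tail (exp_weighted a u) x <= k / (a + theta) * exp ((a + theta) * x)).
  { apply (left_tail_le _ _ (weighted_cont a) (weighted_ge0 a) left_bounded). intros t Ht.
    eapply Rle_trans.
    { apply (RInt_le_exp _ k (a + theta) t x); [apply weighted_cont|lra|exact Ht|].
      intros y Hy. unfold exp_weighted, k.
      rewrite Rmult_assoc, <- Hshift. pose proof (exp_pos (a * y)).
      pose proof (Hu y (proj2 Hy)). nra. }
    pose proof (exp_pos ((a + theta) * t)). nra. }
  unfold conv_left. pose proof (exp_pos (- a * x)).
  apply Rle_trans with ((a + theta) * (exp (- a * x) * (k / (a + theta) * exp ((a + theta) * x)))).
  - apply Rmult_le_compat_l; [lra|]. apply Rmult_le_compat_l; lra.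
  - right. unfold k.
    replace (theta * (x - x1)) with (- a * x + (- theta * x1 + (a + theta) * x)) by ring.
    rewrite !exp_plus. field. lra.
Qed.

End ExpKernel.

Lemma Psi_conv (nu mu K : R) (u : R -> R) (x : R) :
  0 < nu -> (forall y, continuous u y) -> (forall y, 0 <= u y <= K) ->
  Psi nu mu u x = mu / (2 * sqrt nu) * (conv_left (sqrt nu) u x + conv_right (sqrt nu) u x).
Proof.
  intros Hnu Hu Hbounds. unfold Psi.
  rewrite (is_RInt_gen_unique _ _ (is_RInt_gen_exp_abs _ K u (sqrt_lt_R0 nu Hnu) Hu Hbounds x)).
  reflexivity.
Qed.

Lemma Derive_Psi (nu mu K : R) (u : R -> R) (x : R) :
  0 < nu -> (forall y, continuous u y) -> (forall y, 0 <= u y <= K) ->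
  Derive (Psi nu mu u) x = mu / 2 * (conv_right (sqrt nu) u x - conv_left (sqrt nu) u x).
Proof.
  intros Hnu Hu Hbounds. pose proof (sqrt_lt_R0 nu Hnu) as Ha.
  rewrite (Derive_ext _ _ x (fun z => Psi_conv nu mu K u z Hnu Hu Hbounds)).
  apply is_derive_unique.
  replace (mu / 2 * (conv_right (sqrt nu) u x - conv_left (sqrt nu) u x)) with
    (mu / (2 * sqrt nu) * ((u x - sqrt nu * conv_left (sqrt nu) u x)
                           + (sqrt nu * conv_right (sqrt nu) u x - u x))) by (field; lra).
  apply is_derive_scal, (is_derive_plus (conv_left (sqrt nu) u) (conv_right (sqrt nu) u)).
  - exact (is_derive_conv_left _ K u Ha Hu Hbounds x).
  - exact (is_derive_conv_right _ K u Ha Hu Hbounds x).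
Qed.

Lemma Psi_ge0 (nu mu K : R) (u : R -> R) (x : R) :
  0 < nu -> 0 < mu -> (forall y, continuous u y) -> (forall y, 0 <= u y <= K) ->
  0 <= Psi nu mu u x.
Proof.
  intros Hnu Hmu Hu Hbounds. pose proof (sqrt_lt_R0 nu Hnu) as Ha.
  rewrite (Psi_conv nu mu K u x Hnu Hu Hbounds).
  apply Rmult_le_pos; [apply Rdiv_le_0_compat; lra|].
  apply Rplus_le_le_0_compat; [apply (conv_left_ge0 _ K)|apply (conv_right_ge0 _ K)]; auto.
Qed.

Lemma E1plus_bounds (rstar b chi mu theta1 x1 : R) (u : R -> R) :
  E1plus rstar b chi mu theta1 x1 u ->
  (forall x, continuous u x) /\
  (forall x, 0 <= u x <= rstar / (b - chi * mu)) /\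
  (forall x, u x <= rstar / (b - chi * mu) * exp (theta1 * (x - x1))).
Proof.
  intros [[_ Hunif] Hu]. split; [exact (continuous_of_unif_cont u Hunif)|].
  split; intros x; destruct (Hu x) as [Hge0 Hle]; unfold U1plus in Hle.
  - split; [exact Hge0|]. eapply Rle_trans; [exact Hle|apply Rmin_l].
  - eapply Rle_trans; [exact Hle|apply Rmin_r].
Qed.

Lemma A_op_const (chi b nu mu c : R) (r u : R -> R) (K x : R) :
  A_op chi b nu mu c r u (fun _ => K) x
  = (r x - chi * nu * Psi nu mu u x - (b - chi * mu) * K) * K.
Proof. unfold A_op. rewrite (Derive_n_const 1), Derive_const. ring. Qed.

Lemma A_op_exp (chi b nu mu c : R) (r u : R -> R) (K theta x1 x : R) :
  A_op chi b nu mu c r u (fun y => K * exp (theta * (y - x1))) x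
  = (theta ^ 2 + (c - chi * Derive (Psi nu mu u) x) * theta + r x
     - chi * nu * Psi nu mu u x - (b - chi * mu) * (K * exp (theta * (x - x1))))
    * (K * exp (theta * (x - x1))).
Proof.
  set (U := fun y => K * exp (theta * (y - x1))).
  assert (HdU : forall t, Derive U t = theta * U t).
  { intros t. apply is_derive_unique. unfold U. auto_derive; auto. unfold Rminus. ring. }
  assert (Hd2U : Derive_n U 2 x = theta * (theta * U x)).
  { change (Derive (Derive U) x = theta * (theta * U x)). rewrite (Derive_ext _ _ x HdU).
    apply is_derive_unique. unfold U. auto_derive; auto. unfold Rminus. ring. }
  unfold A_op. rewrite Hd2U, HdU. unfold U. ring.
Qed.

Lemma supersolution_bracket_nonpos (chi b nu mu c theta r1 rx S T U : R) :
  0 < chi -> 0 < nu -> 0 < mu -> 0 < theta -> 3 / 2 * chi * mu <= b ->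
  0 <= S -> 0 <= T -> (sqrt nu + theta) * S <= U ->
  theta ^ 2 + c * theta + r1 = 0 -> rx <= r1 ->
  theta ^ 2 + (c - chi * (mu / 2 * (T - S))) * theta + rx
  - chi * nu * (mu / (2 * sqrt nu) * (S + T)) - (b - chi * mu) * U <= 0.
Proof.
  intros Hchi Hnu Hmu Htheta Hb HS HT HSU Hroot Hrx.
  pose proof (sqrt_lt_R0 nu Hnu) as Ha.
  replace (chi * nu * (mu / (2 * sqrt nu) * (S + T))) with (chi * mu / 2 * sqrt nu * (S + T)).
  2:{ rewrite <- (sqrt_sqrt nu) at 2 by lra. field. lra. }
  assert (0 <= chi * mu / 2) by (apply Rmult_le_pos; [apply Rmult_le_pos|]; lra).
  assert (chi * mu / 2 * ((theta - sqrt nu) * S) <= chi * mu / 2 * U)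
    by (apply Rmult_le_compat_l; nra).
  assert (0 <= chi * mu / 2 * (theta * T + sqrt nu * T)) by (apply Rmult_le_pos; nra).
  assert (0 <= (b - 3 / 2 * chi * mu) * U) by (apply Rmult_le_pos; nra).
  assert (theta ^ 2 + c * theta = - r1) by lra.
  lra.
Qed.

Theorem lemma3p1 (chi b nu mu c : R) (r : R -> R) (rm rp r1 x1 theta1 : R) :
  0 < chi -> 0 < b -> 0 < nu -> 0 < mu ->
  b >= 3 / 2 * chi * mu ->
  holder r ->
  (exists M, forall x, Rabs (r x) <= M) ->
  is_lim r m_infty rm -> is_lim r p_infty rp ->
  rm < 0 -> 0 < rp ->
  (forall x, rm <= r x <= rp) ->
  rm < r1 -> r1 < 0 ->
  (forall x, x <= x1 -> r x <= r1) ->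
  0 < theta1 -> theta1 ^ 2 + c * theta1 + r1 = 0 ->
  forall u : R -> R, E1plus rp b chi mu theta1 x1 u ->
    (forall x, A_op chi b nu mu c r u (fun _ => rp / (b - chi * mu)) x <= 0) /\
    (forall x, x < x1 ->
       A_op chi b nu mu c r u
         (fun y => rp / (b - chi * mu) * exp (theta1 * (y - x1))) x <= 0).
Proof.
  intros Hchi Hb Hnu Hmu Hb32 _ _ _ _ _ Hrp Hr _ _ Hr1 Htheta Hroot u HuE.
  destruct (E1plus_bounds _ _ _ _ _ _ _ HuE) as [Hu [Hbounds Hexp]].
  assert (Hgap : 0 < b - chi * mu) by nra.
  set (K := rp / (b - chi * mu)) in *.
  assert (HK : 0 < K) by (apply Rdiv_lt_0_compat; lra).
  assert (HKrp : (b - chi * mu) * K = rp) by (unfold K; field; lra).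
  split.
  - intros x. rewrite A_op_const.
    pose proof (Psi_ge0 nu mu K u x Hnu Hmu Hu Hbounds). pose proof (Hr x).
    assert (0 <= chi * nu * Psi nu mu u x) by (apply Rmult_le_pos; nra).
    nra.
  - intros x Hx. rewrite A_op_exp, (Derive_Psi nu mu K), (Psi_conv nu mu K) by assumption.
    pose proof (sqrt_lt_R0 nu Hnu) as Ha.
    assert (HU : 0 < K * exp (theta1 * (x - x1))) by (apply Rmult_lt_0_compat; [lra|apply exp_pos]).
    rewrite <- (Rmult_0_l (K * exp (theta1 * (x - x1)))).
    apply Rmult_le_compat_r; [lra|].
    apply (supersolution_bracket_nonpos _ _ _ _ _ _ r1); try lra.
    + apply (conv_left_ge0 _ K); assumption.
    + apply (conv_right_ge0 _ K); assumption.
    + apply (conv_left_le_exp _ K); auto; lra.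
    + apply Hr1. lra.
Qed.
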